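(* Let $T=(T,\eta,\mu)$ be a Kock–Zöberlein monad on a poset-enriched category $\mathcal{A}$, let $a\colon T(X)\to X$ be a $T$-algebra, and let $c\colon X\to T(X)$ be a map of algebras from $a$ to $\overline{T}(a)=\mu_X$ (i.e. $c\circ a=\mu_X\circ T(c)$). The following are equivalent: (1) $c$ is an Eilenberg–Moore coalgebra of the comonad $\overline{T}$ on $a$ (i.e. additionally $a\circ c=\mathrm{id}_X$ and $T(\eta_X)\circ c=T(c)\circ c$); (2) $a\circ c=\mathrm{id}_X$ and $c\circ a\le\mathrm{id}_{T(X)}$, i.e. $c$ is a left adjoint right inverse of the counit $a$ (a coreflection $c\dashv a$).
   Context: A poset-enriched category has hom-posets with monotone composition; $f\dashv g$ means $\mathrm{id}\le g\circ f$ and $f\circ g\le\mathrm{id}$. A monad $T$ is Kock–Zöberlein if it is monotone on hom-posets and $T(\eta_X)\le\eta_{T(X)}$ for all $X$. $\overline{T}$ is the comonad on the category of $T$-algebras (also poset-enriched) induced by the free-algebra adjunction: $\overline{T}(a)=\mu_X\colon T^2X\to TX$ for $a\colon TX\to X$, with counit $a\colon\overline{T}(a)\to a$ and comultiplication $T(\eta_X)$. *)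

Set Implicit Arguments.
Unset Strict Implicit.

Record PosCat := {
  Ob :> Type;
  Hom : Ob -> Ob -> Type;
  idm : forall X, Hom X X;
  comp : forall X Y Z, Hom Y Z -> Hom X Y -> Hom X Z;  (* comp g f = g o f *)
  comp_id_l : forall X Y (f : Hom X Y), comp (idm Y) f = f;
  comp_id_r : forall X Y (f : Hom X Y), comp f (idm X) = f;
  comp_assoc : forall X Y Z W (h : Hom Z W) (g : Hom Y Z) (f : Hom X Y),
      comp h (comp g f) = comp (comp h g) f;
  hle : forall X Y, Hom X Y -> Hom X Y -> Prop;
  hle_refl : forall X Y (f : Hom X Y), hle f f;
  hle_trans : forall X Y (f g h : Hom X Y), hle f g -> hle g h -> hle f h;
  hle_antisym : forall X Y (f g : Hom X Y), hle f g -> hle g f -> f = g;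
  comp_mono : forall X Y Z (g g' : Hom Y Z) (f f' : Hom X Y),
      hle g g' -> hle f f' -> hle (comp g f) (comp g' f')
}.

Arguments idm {C} X : rename.
Arguments comp {C X Y Z} g f : rename.
Arguments hle {C X Y} f g : rename.

Record Monad (C : PosCat) := {
  T0 : C -> C;
  T1 : forall X Y : C, @Hom C X Y -> @Hom C (T0 X) (T0 Y);
  T1_id : forall X : C, T1 (idm X) = idm (T0 X);
  T1_comp : forall X Y Z : C, forall (g : @Hom C Y Z) (f : @Hom C X Y),
      T1 (comp g f) = comp (T1 g) (T1 f);
  eta : forall X : C, @Hom C X (T0 X);
  mu : forall X : C, @Hom C (T0 (T0 X)) (T0 X);
  eta_nat : forall (X Y : C) (f : @Hom C X Y), comp (eta Y) f = comp (T1 f) (eta X);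
  mu_nat : forall (X Y : C) (f : @Hom C X Y),
      comp (mu Y) (T1 (T1 f)) = comp (T1 f) (mu X);
  mu_eta_l : forall X : C, comp (mu X) (eta (T0 X)) = idm (T0 X);
  mu_eta_r : forall X : C, comp (mu X) (T1 (eta X)) = idm (T0 X);
  mu_assoc : forall X : C, comp (mu X) (T1 (mu X)) = comp (mu X) (mu (T0 X))
}.

Arguments T0 {C} m X : rename.
Arguments T1 {C} m {X Y} f : rename.
Arguments eta {C} m X : rename.
Arguments mu {C} m X : rename.

Definition KZ {C : PosCat} (M : Monad C) : Prop :=
  (forall X Y (f g : @Hom C X Y), hle f g -> hle (T1 M f) (T1 M g)) /\
  (forall X, hle (T1 M (eta M X)) (eta M (T0 M X))).

Definition is_T_algebra {C : PosCat} (M : Monad C) (X : C)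
    (a : @Hom C (T0 M X) X) : Prop :=
  comp a (eta M X) = idm X /\ comp a (T1 M a) = comp a (mu M X).

Definition is_alg_map_to_free {C : PosCat} (M : Monad C) (X : C)
    (a : @Hom C (T0 M X) X) (c : @Hom C X (T0 M X)) : Prop :=
  comp c a = comp (mu M X) (T1 M c).

(* c is an Eilenberg–Moore coalgebra of the comonad Tbar on a
   (counit a, comultiplication T(eta_X)). *)
Definition is_Tbar_coalgebra {C : PosCat} (M : Monad C) (X : C)
    (a : @Hom C (T0 M X) X) (c : @Hom C X (T0 M X)) : Prop :=
  comp a c = idm X /\ comp (T1 M (eta M X)) c = comp (T1 M c) c.


(* For a KZ monad the multiplication has T(eta_X) as a left
   adjoint, T(eta_X) -| mu_X; in particular T(eta_X) o mu_X <= id.  For an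
   algebra map c : a -> mu_X with a o c = id, both conditions of the theorem
   are equivalent to the single inequality c <= eta_X:
   - c o a <= id gives c = (c o a) o eta_X <= eta_X, since a o eta_X = id;
   - c <= eta_X gives c o a = mu_X o T(c) <= mu_X o T(eta_X) = id;
   - the coassociativity T(eta_X) o c = T(c) o c gives
     c = T(a) o T(c) o c = T(a) o T(eta_X) o c <= T(a) o eta_{TX} o c = eta_X;
   - conversely, c <= eta_X gives T(c) o c <= T(eta_X) o c, and
     T(eta_X) o c = T(eta_X) o c o a o c = T(eta_X) o mu_X o T(c) o c <= T(c) o c. *)

Section Whiskering.
Variable C : PosCat.

Lemma hle_of_eq (X Y : C) (f g : @Hom C X Y) : f = g -> hle f g.
Proof. intros ->. apply hle_refl. Qed.

Lemma hle_comp_l (X Y Z : C) (g : @Hom C Y Z) (f f' : @Hom C X Y) :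
  hle f f' -> hle (comp g f) (comp g f').
Proof. intros Hf. apply comp_mono; [apply hle_refl | exact Hf]. Qed.

Lemma hle_comp_r (X Y Z : C) (g g' : @Hom C Y Z) (f : @Hom C X Y) :
  hle g g' -> hle (comp g f) (comp g' f).
Proof. intros Hg. apply comp_mono; [exact Hg | apply hle_refl]. Qed.

Lemma hle_section_of_counit (X Y : C) (a : @Hom C Y X) (e h : @Hom C X Y) :
  comp a e = idm X -> hle (comp h a) (idm Y) -> hle h e.
Proof.
  intros Hae Hha.
  apply hle_trans with (comp (comp h a) e).
  - rewrite <- comp_assoc, Hae, comp_id_r. apply hle_refl.
  - apply hle_trans with (comp (idm Y) e).
    + apply hle_comp_r. exact Hha.
    + rewrite comp_id_l. apply hle_refl.
Qed.

End Whiskering.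

Arguments hle_section_of_counit {C X Y a e h} _ _.

Section KockZoeberlein.
Variables (C : PosCat) (M : Monad C).
Hypothesis T_mono : forall (X Y : C) (f g : @Hom C X Y),
  hle f g -> hle (T1 M f) (T1 M g).
Hypothesis T_eta_le_eta : forall X : C, hle (T1 M (eta M X)) (eta M (T0 M X)).

(* The counit half of the adjunction T(eta_X) -| mu_X of a KZ monad. *)
Lemma T_eta_mu_le_id (X : C) :
  hle (comp (T1 M (eta M X)) (mu M X)) (idm (T0 M (T0 M X))).
Proof.
  rewrite <- (mu_nat M (eta M X)), <- (mu_eta_r M (T0 M X)).
  apply hle_comp_l, T_mono, T_eta_le_eta.
Qed.

Variables (X : C) (a : @Hom C (T0 M X) X) (c : @Hom C X (T0 M X)).
Hypothesis c_alg_map : is_alg_map_to_free a c.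

Lemma below_unit_comp_le_id : hle c (eta M X) -> hle (comp c a) (idm (T0 M X)).
Proof.
  intros Hce. unfold is_alg_map_to_free in c_alg_map.
  rewrite c_alg_map, <- (mu_eta_r M X).
  apply hle_comp_l, T_mono, Hce.
Qed.

Lemma coalgebra_below_unit : is_Tbar_coalgebra a c -> hle c (eta M X).
Proof.
  intros [Hac Hcoassoc].
  assert (Hc : c = comp (T1 M a) (comp (T1 M c) c)).
  { rewrite comp_assoc, <- T1_comp, Hac, T1_id, comp_id_l. reflexivity. }
  apply hle_trans with (comp (T1 M a) (comp (T1 M c) c)); [apply hle_of_eq, Hc |].
  rewrite <- Hcoassoc.
  apply hle_trans with (comp (T1 M a) (comp (eta M (T0 M X)) c)).
  - apply hle_comp_l, hle_comp_r, T_eta_le_eta.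
  - rewrite comp_assoc, <- eta_nat, <- comp_assoc, Hac, comp_id_r.
    apply hle_refl.
Qed.

Lemma coreflection_coassoc :
  comp a c = idm X -> hle (comp c a) (idm (T0 M X)) -> hle c (eta M X) ->
  comp (T1 M (eta M X)) c = comp (T1 M c) c.
Proof.
  intros Hac Hca Hce. apply hle_antisym.
  - assert (Hexp : comp (T1 M (eta M X)) c
                   = comp (comp (T1 M (eta M X)) (mu M X)) (comp (T1 M c) c)).
    { rewrite <- comp_assoc, (comp_assoc (mu M X)), <- c_alg_map,
        <- comp_assoc, Hac, comp_id_r. reflexivity. }
    rewrite Hexp.
    apply hle_trans with (comp (idm (T0 M (T0 M X))) (comp (T1 M c) c)).
    + apply hle_comp_r, T_eta_mu_le_id.
    + rewrite comp_id_l. apply hle_refl.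
  - apply hle_comp_r, T_mono, Hce.
Qed.

End KockZoeberlein.

Arguments below_unit_comp_le_id {C M} T_mono {X a c} c_alg_map _.
Arguments coalgebra_below_unit {C M} T_eta_le_eta {X a c} _.
Arguments coreflection_coassoc {C M} T_mono T_eta_le_eta {X a c} c_alg_map _ _ _.

Theorem theorem4p2 (C : PosCat) (M : Monad C) (X : C)
    (a : @Hom C (T0 M X) X) (c : @Hom C X (T0 M X)) :
  KZ M -> is_T_algebra a -> is_alg_map_to_free a c ->
  (is_Tbar_coalgebra a c <->
   (comp a c = idm X /\ hle (comp c a) (idm (T0 M X)))).
Proof.
  intros [T_mono T_eta_le_eta] [a_unit _] c_alg_map.
  split.
  - intros Hcoalg. split; [apply Hcoalg |].
    apply (below_unit_comp_le_id T_mono c_alg_map).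
    exact (coalgebra_below_unit T_eta_le_eta Hcoalg).
  - intros [Hac Hca].
    pose proof (hle_section_of_counit a_unit Hca) as Hce.
    split; [exact Hac |].
    exact (coreflection_coassoc T_mono T_eta_le_eta c_alg_map Hac Hca Hce).
Qed.
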